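(* Let $G$ be a connected graph with $m$ edges whose normalized Laplacian spectrum is $\{[\alpha]^{m_1},[\beta]^{m_2},[0]^1\}$ with $2\geq\alpha>\beta>0$ (i.e. $G$ has exactly the three distinct normalized Laplacian eigenvalues $\alpha,\beta,0$, with $0$ simple). Then $\beta\leq 1$, and one of the following holds: (i) $\beta=1$, and every pair of non-adjacent vertices of $G$ have the same neighborhood; (ii) $\beta<1$, and for any two non-adjacent vertices $u,v$ of $G$, $$-\frac{2m(\alpha-1)(\beta-1)}{\alpha\beta}\geq d_u-d_v\geq \frac{2m(\alpha-1)(\beta-1)}{\alpha\beta}.$$
   Context: $d_u$ denotes the degree of vertex $u$. For a graph with adjacency matrix $A$ and diagonal degree matrix $D$ (no isolated vertices), the normalized Laplacian is $\mathcal{L}=I-D^{-1/2}AD^{-1/2}$; its eigenvalues (with multiplicities) form the normalized Laplacian spectrum, written $\{[\lambda_1]^{m_1},\ldots,[\lambda_t]^{m_t}\}$. *)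

From HB Require Import structures.
From mathcomp Require Import all_boot all_order all_algebra.
From mathcomp Require Import reals.
Set Implicit Arguments. Unset Strict Implicit. Unset Printing Implicit Defensive.
Import Order.TTheory GRing.Theory Num.Theory.
Local Open Scope ring_scope.

Definition simple_graph (n : nat) (adj : rel 'I_n) : Prop :=
  (forall u v, adj u v = adj v u) /\ (forall u, ~~ adj u u).

Definition connected_graph (n : nat) (adj : rel 'I_n) : Prop :=
  forall u v, connect adj u v.

Definition deg (n : nat) (adj : rel 'I_n) (u : 'I_n) : nat := #|[set v | adj u v]|.

Definition nedges (n : nat) (adj : rel 'I_n) : nat :=
  #|[set p : 'I_n * 'I_n | adj p.1 p.2 && (p.1 < p.2)%N]|.

Definition norm_laplacian (R : realType) (n : nat) (adj : rel 'I_n) : 'M[R]_n :=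
  \matrix_(i, j) ((i == j)%:R -
     (adj i j)%:R / (Num.sqrt ((deg adj i)%:R) * Num.sqrt ((deg adj j)%:R))).

(* The normalized Laplacian L is real symmetric, so its minimal polynomial is
   squarefree and L (L - alpha) (L - beta) = 0.  The columns of
   E = (L - alpha) (L - beta) thus lie in the kernel of L, which for a connected
   graph is spanned by s = (sqrt d_u); hence E = c s s^T, and E s = alpha beta s
   gives 2 m c = alpha beta.  Reading off the entries of E, the weighted
   co-degree codeg = A D^-1 A satisfies codeg u v = c d_u d_v for non-adjacent
   u <> v and codeg u u = c d_u^2 - d_u t, where t = (alpha - 1) (beta - 1).
   As codeg u v <= codeg u u, a non-adjacent pair (which exists, a complete
   graph having only one nonzero eigenvalue) gives c d_v <= c d_u - t and
   symmetrically, whence t <= 0, beta <= 1 and the degree bounds; if t = 0 then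
   codeg u v = codeg u u, which forces u and v to have the same neighbours. *)

From HB Require Import structures.
From mathcomp Require Import all_boot all_order all_algebra.
From mathcomp Require Import reals ring lra.
Import Order.TTheory GRing.Theory Num.Theory.
Local Open Scope ring_scope.

Set Implicit Arguments. Unset Strict Implicit. Unset Printing Implicit Defensive.

Lemma mulmx_subr_scalarE (R : comNzRingType) n (A : 'M[R]_n) a b i j :
  ((A - a%:M) *m (A - b%:M)) i j
  = (A *m A) i j - (a + b) * A i j + a * b * (i == j)%:R.
Proof.
rewrite mulmxBl !mulmxBr mul_mx_scalar !mul_scalar_mx scale_scalar_mx !mxE.
by rewrite -mulr_natr; ring.
Qed.

Section SymmetricMatrix.
Variable R : realFieldType.

Lemma sym_mx_sqr_eq0 n (B : 'M[R]_n) : B^T = B -> B *m B = 0 -> B = 0.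
Proof.
move=> symB BB0; apply/matrixP => i j; rewrite mxE.
have /eqP : (B *m B) i i = 0 by rewrite BB0 mxE.
rewrite mxE (eq_bigr (fun k => B i k ^+ 2)) => [|k _]; last first.
  by rewrite expr2 -{2}symB mxE.
rewrite psumr_eq0 => [/allP/(_ j (mem_index_enum j))|k _]; last exact: sqr_ge0.
by rewrite sqrf_eq0 => /eqP.
Qed.

Lemma sym_mx_nilpotent n (B : 'M[R]_n.+1) k : B^T = B -> B ^+ k.+1 = 0 -> B = 0.
Proof.
move=> symB; have symBX j : (B ^+ j)^T = B ^+ j.
  elim: j => [|j IHj]; first by rewrite expr0 trmx1.
  by rewrite exprSr -mulmxE trmx_mul IHj symB !mulmxE -exprS exprSr.
elim: k => [|k IHk]; first by rewrite expr1.
move=> BX0; apply: IHk; apply: sym_mx_sqr_eq0 => //.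
by rewrite mulmxE -exprD addSn -addnS exprD BX0 mulr0.
Qed.

Lemma trmx_horner_mx n (A : 'M[R]_n.+1) p : (horner_mx A p)^T = horner_mx A^T p.
Proof.
elim/poly_ind: p => [|p a IHp]; first by rewrite !rmorph0 trmx0.
rewrite !rmorphD !rmorphM /= !horner_mx_X !horner_mx_C linearD /= tr_scalar_mx.
by rewrite -!mulmxE trmx_mul IHp (comm_mx_horner p (erefl : comm_mx A^T A^T)).
Qed.

Lemma sym_mx_horner_eq0 n (A : 'M[R]_n.+1) p k : A^T = A -> (0 < k)%N ->
  char_poly A %| p ^+ k -> horner_mx A p = 0.
Proof.
case: k => // k symA _ dvd_char.
apply: (@sym_mx_nilpotent _ _ k); first by rewrite trmx_horner_mx symA.
by rewrite -rmorphXn -(divpK dvd_char) rmorphM /= Cayley_Hamilton mulr0.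
Qed.

Lemma sym_mx_annihilator n (A : 'M[R]_n.+1) a b m1 m2 : A^T = A ->
  (0 < m1)%N -> (0 < m2)%N ->
  char_poly A = ('X - a%:P) ^+ m1 * ('X - b%:P) ^+ m2 * 'X ->
  A *m ((A - a%:M) *m (A - b%:M)) = 0.
Proof.
move=> symA m1_gt0 m2_gt0 charA.
have dvd_char : char_poly A %| ('X * (('X - a%:P) * ('X - b%:P))) ^+ (m1 + m2).
  rewrite charA mulrC !exprMn !dvdp_mul ?dvdp_exp2l ?leq_addr ?leq_addl //.
  by rewrite dvdp_exp ?addn_gt0 ?m1_gt0.
have := sym_mx_horner_eq0 symA (leq_trans m1_gt0 (leq_addr _ _)) dvd_char.
by rewrite !rmorphM !rmorphB /= horner_mx_X !horner_mx_C -!mulmxE.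
Qed.

End SymmetricMatrix.

Lemma sumr_delta (R : pzSemiRingType) (I : finType) (i : I) (F : I -> R) :
  \sum_j (i == j)%:R * F j = F i.
Proof.
rewrite (bigD1 i) //= eqxx mul1r big1 ?addr0 // => j /negbTE.
by rewrite eq_sym => ->; rewrite mul0r.
Qed.

Section NormalizedLaplacian.
Variables (R : realType) (n : nat) (adj : rel 'I_n.+1).
Hypotheses (adj_sym : symmetric adj) (adj_irr : forall u, ~~ adj u u).
Hypothesis deg_gt0 : forall u, (0 < deg adj u)%N.

Local Notation L := (norm_laplacian R adj).

Definition adjR u v : R := (adj u v)%:R.
Definition degR u : R := (deg adj u)%:R.
Definition sdeg u : R := Num.sqrt (degR u).
Definition sdeg_col : 'cV[R]_n.+1 := \col_u sdeg u.

Lemma degR_gt0 u : 0 < degR u.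
Proof. by rewrite ltr0n. Qed.

Lemma sdeg_gt0 u : 0 < sdeg u.
Proof. by rewrite sqrtr_gt0 degR_gt0. Qed.

Lemma sdeg_neq0 u : sdeg u != 0.
Proof. exact: lt0r_neq0 (sdeg_gt0 u). Qed.

Lemma sdeg_sqr u : sdeg u ^+ 2 = degR u.
Proof. by rewrite sqr_sqrtr // ltW // degR_gt0. Qed.

Lemma adjR_sym u v : adjR u v = adjR v u.
Proof. by rewrite /adjR adj_sym. Qed.

Lemma deg_sum u : deg adj u = (\sum_w adj u w)%N.
Proof. by rewrite /deg -sum1dep_card big_mkcond; apply: eq_bigr => w _; case: ifP. Qed.

Lemma degR_sum u : degR u = \sum_w adjR u w.
Proof. by rewrite /degR deg_sum natr_sum. Qed.

Lemma sum_deg : (\sum_u deg adj u)%N = (2 * nedges adj)%N.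
Proof.
under eq_bigr => u _ do rewrite deg_sum.
rewrite pair_bigA /= /nedges -sum1dep_card big_mkcond /=.
have split_lt (p : 'I_n.+1 * 'I_n.+1) : (adj p.1 p.2 : nat) =
    ((adj p.1 p.2 && (p.1 < p.2)) + (adj p.1 p.2 && (p.2 < p.1)))%N.
  case: p => u v /=; case: (ltngtP u v) => [_|_|/val_inj ->].
  - by case: (adj u v).
  - by case: (adj u v).
  - by rewrite (negbTE (adj_irr v)).
under eq_bigr => p _ do rewrite split_lt.
have swap_inj : injective (fun p : 'I_n.+1 * 'I_n.+1 => (p.2, p.1)).
  by move=> [? ?] [? ?] [-> ->].
rewrite big_split /= [X in (_ + X)%N](reindex_inj swap_inj) /=.
under [X in (_ + X)%N]eq_bigr => p _ do rewrite adj_sym.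
rewrite addnn -mul2n; congr (2 * _)%N.
by rewrite [RHS]big_mkcond; apply: eq_bigr => p _; case: (_ && _).
Qed.

Lemma norm_laplacianE u v : L u v = (u == v)%:R - adjR u v / (sdeg u * sdeg v).
Proof. by rewrite mxE. Qed.

Lemma norm_laplacian_sym u v : L u v = L v u.
Proof. by rewrite !norm_laplacianE eq_sym adjR_sym [sdeg u * _]mulrC. Qed.

Lemma trmx_norm_laplacian : L^T = L.
Proof. by apply/matrixP => u v; rewrite mxE norm_laplacian_sym. Qed.

Lemma norm_laplacian_sdeg : L *m sdeg_col = 0.
Proof.
apply/matrixP => u i; rewrite !mxE.
under eq_bigr => w _ do rewrite norm_laplacianE mxE mulrBl.
rewrite sumrB sumr_delta.
under eq_bigr => w _ do rewrite invfM mulrA divfK ?sdeg_neq0 //.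
by rewrite -mulr_suml -degR_sum -sdeg_sqr expr2 mulfK ?sdeg_neq0 ?subrr.
Qed.

Lemma norm_laplacian_dirichlet (y : 'I_n.+1 -> R) :
  \sum_u \sum_w sdeg u * y u * L u w * (sdeg w * y w)
  = (\sum_u \sum_w adjR u w * (y u - y w) ^+ 2) / 2.
Proof.
have termE u w : sdeg u * y u * L u w * (sdeg w * y w)
    = (u == w)%:R * (degR u * y u ^+ 2) - adjR u w * y u * y w.
  rewrite norm_laplacianE -sdeg_sqr.
  by case: (eqVneq u w) => [->|_]; rewrite /= ?mulr1n ?mulr0n; field; rewrite ?sdeg_neq0.
have sqE u w : adjR u w * (y u - y w) ^+ 2
    = adjR u w * y u ^+ 2 + adjR u w * y w ^+ 2 - 2 * (adjR u w * y u * y w).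
  by ring.
have sum_sq_l : \sum_u \sum_w adjR u w * y u ^+ 2 = \sum_u degR u * y u ^+ 2.
  by apply: eq_bigr => u _; rewrite degR_sum mulr_suml.
have sum_sq_r : \sum_u \sum_w adjR u w * y w ^+ 2 = \sum_u degR u * y u ^+ 2.
  rewrite exchange_big -sum_sq_l; apply: eq_bigr => u _.
  by apply: eq_bigr => w _; rewrite adjR_sym.
under eq_bigr => u _ do rewrite (eq_bigr _ (fun w _ => termE u w)) sumrB sumr_delta.
under [in RHS]eq_bigr => u _ do
  rewrite (eq_bigr _ (fun w _ => sqE u w)) sumrB big_split /= -mulr_sumr.
rewrite !sumrB big_split /= sum_sq_l sum_sq_r -mulr_sumr.
by field.
Qed.

Lemma norm_laplacian_ker (x : 'cV[R]_n.+1) : connected_graph adj ->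
  L *m x = 0 -> forall u v, x u 0 / sdeg u = x v 0 / sdeg v.
Proof.
move=> adj_conn Lx0; pose y u := x u 0 / sdeg u.
have xE u : x u 0 = sdeg u * y u by rewrite mulrC divfK ?sdeg_neq0.
have energy0 : \sum_u \sum_w adjR u w * (y u - y w) ^+ 2 = 0.
  have : (\sum_u \sum_w adjR u w * (y u - y w) ^+ 2) / 2 = 0.
    rewrite -norm_laplacian_dirichlet big1 // => u _.
    under eq_bigr => w _ do rewrite -mulrA -!xE.
    by move/matrixP/(_ u 0): Lx0; rewrite !mxE -mulr_sumr => ->; rewrite mulr0.
  by move/eqP; rewrite mulf_eq0 invr_eq0 pnatr_eq0 orbF => /eqP.
have term_ge0 u w : 0 <= adjR u w * (y u - y w) ^+ 2.
  by rewrite mulr_ge0 ?sqr_ge0 ?ler0n.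
have y_adj u v : adj u v -> y u = y v.
  move=> uv; have row0 :=
    psumr_eq0P (fun u _ => sumr_ge0 _ (fun w _ => term_ge0 u w)) energy0.
  move: (psumr_eq0P (fun w _ => term_ge0 u w) (row0 u isT) (i := v) isT).
  by rewrite /adjR uv mul1r => /eqP; rewrite sqrf_eq0 subr_eq0 => /eqP.
move=> u v; have /connectP [p] := adj_conn u v.
elim: p u => [|w p IHp] u /=; first by move=> _ ->.
by case/andP=> /y_adj uw /IHp vp /vp; rewrite -/(y u) uw.
Qed.

Definition codeg u v : R := \sum_w adjR u w * adjR w v / degR w.

Lemma sqr_norm_laplacianE u v : (L *m L) u v =
  (u == v)%:R - 2 * (adjR u v / (sdeg u * sdeg v)) + codeg u v / (sdeg u * sdeg v).
Proof.
rewrite mxE.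
have termE w : L u w * L w v = (u == w)%:R * ((w == v)%:R - adjR w v / (sdeg w * sdeg v))
    - (v == w)%:R * (adjR u w / (sdeg u * sdeg w))
    + adjR u w * adjR w v / degR w / (sdeg u * sdeg v).
  rewrite !norm_laplacianE -(sdeg_sqr w) (eq_sym v).
  by field; rewrite !sdeg_neq0.
under eq_bigr => w _ do rewrite termE.
by rewrite !big_split /= sumrN !sumr_delta -mulr_suml -/(codeg u v); ring.
Qed.

Lemma codeg_diagB u v : codeg u u - codeg u v = \sum_w adjR u w * (1 - adjR w v) / degR w.
Proof.
rewrite -sumrB; apply: eq_bigr => w _.
by rewrite /adjR (adj_sym w u); case: (adj u w); rewrite /= ?mulr1n ?mulr0n; ring.
Qed.

Lemma codeg_diagB_term_ge0 u v w : 0 <= adjR u w * (1 - adjR w v) / degR w.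
Proof. by rewrite divr_ge0 ?mulr_ge0 ?ler0n ?subr_ge0 ?lern1 ?leq_b1 ?ltW ?degR_gt0. Qed.

Lemma codeg_le u v : codeg u v <= codeg u u.
Proof.
rewrite -subr_ge0 codeg_diagB; apply: sumr_ge0 => w _.
exact: codeg_diagB_term_ge0.
Qed.

Lemma codeg_eq_nbr u v : codeg u v = codeg u u -> forall w, adj u w -> adj w v.
Proof.
move=> /esym/eqP; rewrite -subr_eq0 codeg_diagB => /eqP sum0 w uw.
move: (psumr_eq0P (fun w' _ => codeg_diagB_term_ge0 u v w') sum0 (i := w) isT).
rewrite /adjR uw mul1r => /eqP; rewrite mulf_eq0 invr_eq0 (negbTE (lt0r_neq0 (degR_gt0 w))).
by case: (adj w v); rewrite //= subr0 oner_eq0.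
Qed.

Lemma norm_laplacian_eigenvector_orth lam (v : 'rV[R]_n.+1) :
  v *m L = lam *: v -> lam != 0 -> v *m sdeg_col = 0.
Proof.
move=> vL lam_neq0; have : lam *: (v *m sdeg_col) = 0.
  by rewrite scalemxAl -vL -mulmxA norm_laplacian_sdeg mulmx0.
by move/eqP; rewrite scaler_eq0 (negbTE lam_neq0) => /eqP.
Qed.

Lemma complete_norm_laplacian_eigenvalue lam :
  (forall u v, u != v -> adj u v) -> eigenvalue L lam -> lam != 0 ->
  lam = 1 + n%:R^-1.
Proof.
move=> complete /eigenvalueP [v vL v_neq0] lam_neq0.
have adjE u w : adj u w = (u != w).
  by case: (eqVneq u w) => [->|/complete //]; exact/negbTE/adj_irr.
have degE u : deg adj u = n.
  rewrite /deg (_ : [set w | adj u w] = [set~ u]) ?cardsC1 ?card_ord //.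
  by apply/setP => w; rewrite !inE adjE eq_sym.
have n_neq0 : n%:R != 0 :> R by rewrite pnatr_eq0 -lt0n -(degE ord0).
have LE i j : L i j = (1 + n%:R^-1) * (j == i)%:R - n%:R^-1.
  rewrite norm_laplacianE /adjR adjE /sdeg /degR !degE -expr2 sqr_sqrtr ?ler0n //.
  by rewrite eq_sym; case: (j == i); rewrite /= ?mulr1n ?mulr0n; field.
have sum_v : \sum_i v 0 i = 0.
  move/matrixP/(_ 0 0): (norm_laplacian_eigenvector_orth vL lam_neq0).
  rewrite !mxE; under eq_bigr => i _ do rewrite mxE /sdeg /degR degE.
  move/eqP; rewrite -mulr_suml mulf_eq0 sqrtr_eq0 lern0 -(pnatr_eq0 R) (negbTE n_neq0).
  by rewrite orbF => /eqP.
have [j vj_neq0] : exists j, v 0 j != 0.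
  apply/existsP; move: v_neq0; apply: contraR => /existsPn v0.
  by apply/eqP/rowP => j; rewrite mxE; apply/eqP/negPn/v0.
apply: (mulIf vj_neq0); move/matrixP/(_ 0 j): vL; rewrite !mxE => <-.
under eq_bigr => i _ do rewrite LE mulrBr mulrCA [v 0 i * _]mulrC.
by rewrite sumrB -mulr_suml sum_v mul0r subr0 -mulr_sumr sumr_delta.
Qed.

Lemma exists_nonadj alpha beta : eigenvalue L alpha -> eigenvalue L beta ->
  alpha != 0 -> beta != 0 -> alpha != beta -> exists u v, u != v /\ ~~ adj u v.
Proof.
move=> eig_alpha eig_beta alpha_neq0 beta_neq0.
have [/existsP [u /existsP [v /andP [uv nuv]]] _|/existsPn none] :=
  boolP [exists u, exists v, (u != v) && ~~ adj u v]; first by exists u, v.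
have complete u v : u != v -> adj u v.
  by move=> uv; move/existsPn/(_ v): (none u); rewrite uv negbK.
have lamE := complete_norm_laplacian_eigenvalue complete.
by rewrite (lamE _ eig_alpha alpha_neq0) (lamE _ eig_beta beta_neq0) eqxx.
Qed.

Section AnnihilatingCubic.
Variables alpha beta : R.
Hypothesis adj_conn : connected_graph adj.
Local Notation quadL := ((L - alpha%:M) *m (L - beta%:M)).
Hypothesis L_quadL : L *m quadL = 0.

Lemma quadL_sym u v : quadL u v = quadL v u.
Proof.
have LL_sym : (L *m L) u v = (L *m L) v u.
  have LLT : (L *m L)^T = L *m L by rewrite trmx_mul trmx_norm_laplacian.
  by rewrite -[in RHS]LLT [in RHS]mxE.
by rewrite !mulmx_subr_scalarE LL_sym norm_laplacian_sym eq_sym.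
Qed.

Lemma quadL_rank_one : exists c, forall u v, quadL u v = c * sdeg u * sdeg v.
Proof.
have col_ratio v u w : quadL u v / sdeg u = quadL w v / sdeg w.
  have Lcol : L *m col v quadL = 0 by rewrite colE mulmxA L_quadL mul0mx.
  by have := norm_laplacian_ker adj_conn Lcol u w; rewrite ![col v quadL _ 0]mxE.
exists (quadL 0 0 / sdeg 0 / sdeg 0) => u v.
rewrite -[quadL u v](divfK (sdeg_neq0 u)) (col_ratio v u 0) quadL_sym.
rewrite -[quadL v 0](divfK (sdeg_neq0 v)) (col_ratio 0 v 0).
ring.
Qed.

Lemma quadL_sdeg : quadL *m sdeg_col = (alpha * beta) *: sdeg_col.
Proof.
rewrite -mulmxA [(L - beta%:M) *m _]mulmxBl norm_laplacian_sdeg mul_scalar_mx sub0r.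
rewrite mulmxN -scalemxAr mulmxBl norm_laplacian_sdeg mul_scalar_mx sub0r.
by rewrite scalerN opprK scalerA mulrC.
Qed.

Section RankOne.
Variable c : R.
Hypothesis quadLE : forall u v, quadL u v = c * sdeg u * sdeg v.

Lemma rank_one_coefE : c * (2 * (nedges adj)%:R) = alpha * beta.
Proof.
move/matrixP/(_ 0 0): quadL_sdeg; rewrite !mxE.
under eq_bigr => v _ do rewrite quadLE mxE -mulrA -expr2 sdeg_sqr.
rewrite -mulr_sumr /degR -natr_sum sum_deg natrM => sumE.
by apply: (mulIf (sdeg_neq0 0)); rewrite -sumE; ring.
Qed.

Lemma codeg_rank_one u v : codeg u v = c * degR u * degR v
  - (u == v)%:R * degR u * ((alpha - 1) * (beta - 1)) + (2 - (alpha + beta)) * adjR u v.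
Proof.
have := quadLE u v; rewrite mulmx_subr_scalarE sqr_norm_laplacianE norm_laplacianE => Euv.
have suv_neq0 : sdeg u * sdeg v != 0 by rewrite mulf_neq0 ?sdeg_neq0.
rewrite -[codeg u v](divfK suv_neq0).
have -> : codeg u v / (sdeg u * sdeg v) = c * sdeg u * sdeg v - (u == v)%:R
    + 2 * (adjR u v / (sdeg u * sdeg v))
    + (alpha + beta) * ((u == v)%:R - adjR u v / (sdeg u * sdeg v))
    - alpha * beta * (u == v)%:R.
  by rewrite -Euv; ring.
rewrite -!sdeg_sqr; case: (eqVneq u v) => [<-|_]; rewrite /= ?mulr1n ?mulr0n.
  by field; rewrite sdeg_neq0.
by field; rewrite !sdeg_neq0.
Qed.

Lemma nonadj_degR_le u v : u != v -> ~~ adj u v ->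
  c * degR v <= c * degR u - (alpha - 1) * (beta - 1).
Proof.
move=> uv nuv; rewrite -(ler_pM2l (degR_gt0 u)); have := codeg_le u v.
rewrite !codeg_rank_one eqxx (negbTE uv) /adjR (negbTE nuv) (negbTE (adj_irr u)) /=.
lra.
Qed.

Lemma nonadj_degR_bounds u v : u != v -> ~~ adj u v ->
  c * degR v <= c * degR u - (alpha - 1) * (beta - 1)
  /\ c * degR u <= c * degR v - (alpha - 1) * (beta - 1).
Proof.
move=> uv nuv; split; first exact: nonadj_degR_le.
by apply: nonadj_degR_le; rewrite 1?eq_sym 1?adj_sym.
Qed.

Lemma eigen_sub1_mul_le0 u v : u != v -> ~~ adj u v -> (alpha - 1) * (beta - 1) <= 0.
Proof. by move=> uv nuv; have := nonadj_degR_bounds uv nuv; lra. Qed.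

Lemma nonadj_same_nbr u v : (alpha - 1) * (beta - 1) = 0 -> u != v -> ~~ adj u v ->
  adj u =1 adj v.
Proof.
move=> D0; wlog suff nbr_sub : u v / u != v -> ~~ adj u v -> forall w, adj u w -> adj w v.
  move=> uv nuv w; apply/idP/idP => [uw|vw]; rewrite adj_sym.
    exact: nbr_sub uv nuv w uw.
  by apply: (nbr_sub v u _ _ w vw); rewrite 1?eq_sym 1?adj_sym.
move=> uv nuv; apply: codeg_eq_nbr.
have [] := nonadj_degR_bounds uv nuv; rewrite D0 !subr0 => le_vu le_uv.
have cdE : c * degR u = c * degR v by apply/le_anti; rewrite le_uv le_vu.
rewrite !codeg_rank_one eqxx (negbTE uv) /adjR (negbTE nuv) (negbTE (adj_irr u)) D0.
by rewrite [in RHS]cdE; ring.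
Qed.

Local Notation K := (2 * (nedges adj)%:R * (alpha - 1) * (beta - 1) / (alpha * beta)).

Lemma nonadj_degR_sub u v : 0 < alpha * beta -> u != v -> ~~ adj u v ->
  - K >= degR u - degR v /\ degR u - degR v >= K.
Proof.
move=> ab_gt0 uv nuv.
have m_ge0 : 0 <= (nedges adj)%:R :> R by rewrite ler0n.
have c_gt0 : 0 < c.
  by rewrite ltNge; apply/negP => c_le0; move: ab_gt0; rewrite -rank_one_coefE; nra.
have m_neq0 : (nedges adj)%:R != 0 :> R.
  by apply/eqP => m0; move: ab_gt0; rewrite -rank_one_coefE m0 !mulr0 ltxx.
have KE : K * c = (alpha - 1) * (beta - 1).
  by rewrite -rank_one_coefE; field; rewrite m_neq0 (lt0r_neq0 c_gt0).
have [] := nonadj_degR_bounds uv nuv; rewrite -KE => le_vu le_uv.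
by split; rewrite -(ler_pM2r c_gt0) ?mulNr; lra.
Qed.

End RankOne.
End AnnihilatingCubic.
End NormalizedLaplacian.

Theorem lemma2p4 (R : realType) (n : nat) (adj : rel 'I_n)
  (alpha beta : R) (m1 m2 : nat) :
  simple_graph adj -> connected_graph adj ->
  (forall u, (0 < deg adj u)%N) ->
  (0 < m1)%N -> (0 < m2)%N ->
  alpha <= 2 -> beta < alpha -> 0 < beta ->
  char_poly (norm_laplacian R adj) =
    ('X - alpha%:P) ^+ m1 * ('X - beta%:P) ^+ m2 * 'X ->
  let m : R := (nedges adj)%:R in
  let K : R := 2 * m * (alpha - 1) * (beta - 1) / (alpha * beta) in
  beta <= 1 /\
  ((beta = 1 /\ forall u v : 'I_n, u != v -> ~~ adj u v ->
                  forall w, adj u w = adj v w)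
   \/
   (beta < 1 /\ forall u v : 'I_n, u != v -> ~~ adj u v ->
                  - K >= (deg adj u)%:R - (deg adj v)%:R
                  /\ (deg adj u)%:R - (deg adj v)%:R >= K)).
Proof.
case: n adj => [|n] adj [adj_sym adj_irr] adj_conn deg_gt0 m1_gt0 m2_gt0 _ lt_ba
  beta_gt0 charL.
  move/(congr1 (horner^~ 0)): charL; rewrite /char_poly det_mx00 hornerC !hornerE.
  by move/eqP; rewrite oner_eq0.
have alpha_gt0 := lt_trans beta_gt0 lt_ba.
have eig_alpha : eigenvalue (norm_laplacian R adj) alpha.
  by rewrite eigenvalue_root_char /root charL !hornerE subrr expr0n eqn0Ngt m1_gt0 !mul0r.
have eig_beta : eigenvalue (norm_laplacian R adj) beta.
  by rewrite eigenvalue_root_char /root charL !hornerE subrr expr0n eqn0Ngt m2_gt0 mulr0 mul0r.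
have [u0 [v0 [u0v0 nadj0]]] := exists_nonadj adj_irr deg_gt0 eig_alpha eig_beta
  (lt0r_neq0 alpha_gt0) (lt0r_neq0 beta_gt0) (negbT (gt_eqF lt_ba)).
have L_quadL := sym_mx_annihilator (trmx_norm_laplacian R adj_sym) m1_gt0 m2_gt0 charL.
have [c quadLE] := quadL_rank_one adj_sym deg_gt0 adj_conn L_quadL.
have beta_le1 : beta <= 1.
  by have := eigen_sub1_mul_le0 adj_sym adj_irr deg_gt0 quadLE u0v0 nadj0; nra.
split=> //; have [beta1|beta_neq1] := eqVneq beta 1; [left|right].
  have D0 : (alpha - 1) * (beta - 1) = 0 by rewrite beta1 subrr mulr0.
  by split=> // u v; exact (nonadj_same_nbr adj_sym adj_irr deg_gt0 quadLE D0).
split=> [|u v uv nuv]; first by rewrite lt_neqAle beta_neq1.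
exact (nonadj_degR_sub adj_sym adj_irr deg_gt0 quadLE (mulr_gt0 alpha_gt0 beta_gt0) uv nuv).
Qed.
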